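(* Consider the eigencurve setting in the context. Let $\tilde i\in\{0,\dots,I_{\max}-1\}$ and let $\lambda_j$ be an eigenvalue of $H$ with $\lambda_j\in[\mu2^{\tilde i},\mu2^{\tilde i+1})$. Then $$v_{t_{\tilde i+1},j}\le15\cdot\frac{\eta_{t_{\tilde i+1}}}{\lambda_j},$$ where $v_{t+1,j}=\sum_{k=0}^t\eta_k^2\prod_{i=k+1}^t(1-\eta_i\lambda_j)^2$ and $\eta_{t_{\tilde i+1}}=\left(L+\mu\sum_{j'=1}^{\tilde i+1}\Delta_{j'}2^{j'-1}\right)^{-1}$.
   Context: Let $H\in\mathbb{R}^{d\times d}$ be symmetric positive definite, with $\mu=\lambda_{\min}(H)$, $L=\lambda_{\max}(H)$ and $\kappa=L/\mu$. Let $I_{\max}=\log_2\kappa$, treated as an integer. Fix integers $0=t_0<\dots<t_{I_{\max}}=T$ with $\Delta_i=t_i-t_{i-1}$. The eigencurve learning rate is $$\eta_t=\frac{1}{L+\mu\sum_{j=1}^{i-1}\Delta_j2^{j-1}+2^{i-1}\mu(t-t_{i-1})}\quad\text{for }t\in[t_{i-1},t_i),$$ and at $t=t_{I_{\max}}=T$ it is given by the same formula with $i=I_{\max}$. *)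

From mathcomp Require Import all_boot all_order all_algebra.
Set Implicit Arguments. Unset Strict Implicit. Unset Printing Implicit Defensive.
Import Order.TTheory GRing.Theory Num.Theory.
Local Open Scope ring_scope.

Section Eigencurve.
Variable R : realFieldType.
(* mu = lambda_min, L = lambda_max, Imax = log2 kappa, tb i = t_i *)
Variables (mu L : R) (Imax : nat) (tb : nat -> nat).

Definition Delta (i : nat) : nat := (tb i - tb i.-1)%N.

(* phase t = the index i in [1, Imax] with t in [t_{i-1}, t_i);
   for t = t_{Imax} = T (and beyond) it is Imax. *)
Definition phase (t : nat) : nat :=
  minn (\sum_(1 <= k < Imax.+1) (tb k <= t : nat)).+1 Imax.

Definition eta (t : nat) : R :=
  let i := phase t in
  (L + mu * \sum_(1 <= j < i) (Delta j)%:R * 2 ^+ j.-1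
     + 2 ^+ i.-1 * mu * (t - tb i.-1)%:R)^-1.

Definition vvar (t1 : nat) (lam : R) : R :=
  \sum_(0 <= k < t1) eta k ^+ 2 * \prod_(k.+1 <= i < t1) (1 - eta i * lam) ^+ 2.

End Eigencurve.

(* Throughout phases 1, ..., ĩ+1 of the schedule the bound v_t <= 2 η_t / λ is an
   invariant of the recursion v_{t+1} = (1 - η_t λ)^2 v_t + η_t^2.  Writing
   D = η_t^-1 and D' = η_{t+1}^-1, one step preserves it as soon as λ <= D and
   D' <= D + λ.  The first condition holds because η_t^-1 >= L > λ; the second
   because during phase p+1 the inverse step size grows by 2^p μ <= 2^ĩ μ <= λ
   per iteration.  Since 2 <= 15 this gives the claim. *)
From mathcomp Require Import all_boot all_order all_algebra.
From mathcomp Require Import zify ring.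
Import Order.TTheory GRing.Theory Num.Theory.
Local Open Scope ring_scope.

Lemma posdef_eigenvalue_gt0 {R : realFieldType} {d : nat} {H : 'M[R]_d} {a : R} :
  (forall v : 'rV[R]_d, v != 0 -> 0 < (v *m H *m v^T) 0 0) ->
  eigenvalue H a -> 0 < a.
Proof.
move=> posH /eigenvalueP [v vH v_neq0].
have := posH v v_neq0; rewrite vH -scalemxAl mxE.
have vv_ge0 : 0 <= (v *m v^T) 0 0.
  by rewrite mxE; apply: sumr_ge0 => i _; rewrite mxE -expr2 sqr_ge0.
by rewrite ltNge; apply: contraNT; rewrite -leNgt => /mulr_le0_ge0; apply.
Qed.

Lemma variance_step_le (R : realFieldType) (D D' lam v : R) :
  0 < lam -> lam <= D -> 0 < D' -> D' <= D + lam -> v <= 2 * D^-1 / lam ->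
  (1 - D^-1 * lam) ^+ 2 * v + D^-1 ^+ 2 <= 2 * D'^-1 / lam.
Proof.
move=> lam_gt0 lam_le_D D'_gt0 D'_le hv.
have D_gt0 : 0 < D by apply: lt_le_trans lam_le_D.
apply: (@le_trans _ _ ((1 - D^-1 * lam) ^+ 2 * (2 * D^-1 / lam) + D^-1 ^+ 2)).
  by rewrite lerD2r ler_wpM2l // sqr_ge0.
apply: (@le_trans _ _ (2 * (D + lam)^-1 / lam)); last first.
  by rewrite ler_pM2r ?invr_gt0 // ler_pM2l // lef_pV2 ?posrE // addr_gt0.
rewrite -subr_ge0.
have -> : 2 * (D + lam)^-1 / lam - ((1 - D^-1 * lam) ^+ 2 * (2 * D^-1 / lam) + D^-1 ^+ 2)
    = (D - lam) * (D + 2 * lam) / (D ^+ 3 * (D + lam)).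
  by field; rewrite !lt0r_neq0 ?addr_gt0.
apply: divr_ge0; first by rewrite mulr_ge0 ?subr_ge0 // ltW // addr_gt0 ?mulr_gt0.
by rewrite ltW // mulr_gt0 ?exprn_gt0 ?addr_gt0.
Qed.

Section VarianceRecursion.

Context {R : realFieldType} {eta v : nat -> R} {lam : R}.
Hypothesis lam_gt0 : 0 < lam.
Hypothesis eta_gt0 : forall t, 0 < eta t.
Hypothesis v0 : v 0%N = 0.
Hypothesis vS : forall t, v t.+1 = (1 - eta t * lam) ^+ 2 * v t + eta t ^+ 2.

Lemma variance_le (n : nat) :
  (forall t, (t < n)%N -> lam <= (eta t)^-1 /\ (eta t.+1)^-1 <= (eta t)^-1 + lam) ->
  forall t, (t <= n)%N -> v t <= 2 * eta t / lam.
Proof.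
move=> eta_step; elim=> [|t IH] t_le_n.
  by rewrite v0 divr_ge0 ?mulr_ge0 ?ltW.
have [lam_le D'_le] := eta_step t t_le_n.
rewrite vS -[eta t]invrK -[eta t.+1]invrK.
apply: variance_step_le; rewrite ?invr_gt0 ?invrK //.
exact: IH (ltnW t_le_n).
Qed.

End VarianceRecursion.

Lemma vvar0 (R : realFieldType) (mu L : R) (Imax : nat) (tb : nat -> nat) (lam : R) :
  vvar mu L Imax tb 0 lam = 0.
Proof. by rewrite /vvar big_geq. Qed.

Lemma vvarS (R : realFieldType) (mu L : R) (Imax : nat) (tb : nat -> nat) (t : nat) (lam : R) :
  vvar mu L Imax tb t.+1 lam =
  (1 - eta mu L Imax tb t * lam) ^+ 2 * vvar mu L Imax tb t lam + eta mu L Imax tb t ^+ 2.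
Proof.
rewrite /vvar big_nat_recr //= [\prod_(t.+1 <= i < t.+1) _]big_geq // mulr1.
congr (_ + _); rewrite big_distrr /=; apply: eq_big_nat => k /andP [_ k_lt].
by rewrite big_nat_recr //= mulrA mulrC.
Qed.

Lemma exists_phase {tb : nat -> nat} {m t : nat} : tb 0%N = 0%N -> (t < tb m)%N ->
  exists2 p, (p < m)%N & (tb p <= t < tb p.+1)%N.
Proof.
move=> tb0; elim: m => [|m IH] t_lt; first by rewrite tb0 in t_lt.
case: (ltnP t (tb m)) => [/IH [p p_lt tp] | tm_le]; last by exists m; rewrite ?tm_le.
by exists p => //; apply: ltnW.
Qed.

Section Schedule.

Context {R : realFieldType} {mu L : R} {Imax : nat} {tb : nat -> nat}.
Hypothesis tbS : forall i, (i < Imax)%N -> (tb i < tb i.+1)%N.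

Lemma tb_le i j : (i <= j <= Imax)%N -> (tb i <= tb j)%N.
Proof.
elim: j => [|j IH] /andP [i_le_j j_le]; first by move: i_le_j; rewrite leqn0 => /eqP ->.
case: (ltngtP i j.+1) i_le_j => // [i_lt _|-> _] //.
have := tbS _ j_le; have : (tb i <= tb j)%N by apply: IH; lia.
lia.
Qed.

Lemma tb_lt i j : (i < j <= Imax)%N -> (tb i < tb j)%N.
Proof.
case: j => [|j] /andP [i_lt j_lt] //.
have := tbS _ j_lt; have : (tb i <= tb j)%N by apply: tb_le; lia.
lia.
Qed.

Lemma count_tb_le (p t : nat) : (p <= Imax)%N -> (tb p <= t)%N ->
  p = Imax \/ (t < tb p.+1)%N ->
  (\sum_(1 <= k < Imax.+1) (tb k <= t : nat))%N = p.
Proof.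
move=> p_le tp_le t_lt.
rewrite (@big_cat_nat _ _ _ p.+1) //= (eq_big_nat _ _ (F2 := fun=> 1%N)); last first.
  move=> i /andP [_ i_le]; have : (tb i <= tb p)%N by apply: tb_le; lia.
  by move=> ?; have -> : (tb i <= t)%N by lia.
rewrite sum_nat_const_nat (eq_big_nat _ _ (F2 := fun=> 0%N)) => [|i /andP [i_gt i_le]].
  by rewrite !sum_nat_const_nat; lia.
case: t_lt => [|t_lt]; first lia.
have : (tb p.+1 <= tb i)%N by apply: tb_le; lia.
by move=> ?; have -> : (tb i <= t)%N = false by lia.
Qed.

Lemma etaV_phase (p t : nat) : (p < Imax)%N -> (tb p <= t <= tb p.+1)%N ->
  (eta mu L Imax tb t)^-1
  = L + mu * \sum_(1 <= j < p.+1) (Delta tb j)%:R * 2 ^+ j.-1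
      + 2 ^+ p * mu * (t - tb p)%:R.
Proof.
move=> p_lt /andP [tp_le t_le]; rewrite /eta /phase invrK.
case: (ltngtP t (tb p.+1)) t_le => // [t_lt _|-> _].
  rewrite (@count_tb_le p) ?(ltnW p_lt) //; last by right.
  by rewrite (minn_idPl p_lt).
(* At [t = tb p.+1] the phase index becomes [p.+2] (capped at [Imax]); both formulas agree there. *)
rewrite (@count_tb_le p.+1) //; last first.
  by case: (ltngtP p.+1 Imax) p_lt => // [? _|-> _]; [right; apply: tb_lt; lia | left].
case: (ltngtP p.+1 Imax) p_lt => // [p1_lt _|p1_eq _]; last first.
  by rewrite p1_eq (minn_idPr (leqnSn _)) -p1_eq.
rewrite (minn_idPl p1_lt) /= subnn big_nat_recr //= /Delta /=.
by ring.
Qed.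

Lemma etaV_step {p t : nat} : (p < Imax)%N -> (tb p <= t < tb p.+1)%N ->
  (eta mu L Imax tb t.+1)^-1 = (eta mu L Imax tb t)^-1 + 2 ^+ p * mu.
Proof.
move=> p_lt /andP [tp_le t_lt].
rewrite !(@etaV_phase p) ?tp_le ?(ltnW t_lt) ?t_lt ?(leq_trans tp_le) //.
by rewrite subSn // -natr1; ring.
Qed.

Lemma etaV_ge (t : nat) : 0 <= mu -> L <= (eta mu L Imax tb t)^-1.
Proof.
move=> mu_ge0; rewrite /eta invrK -addrA lerDl.
by rewrite addr_ge0 // !mulr_ge0 ?exprn_ge0 ?sumr_ge0 // => j _; rewrite mulr_ge0 ?exprn_ge0.
Qed.

Lemma eta_gt0 (t : nat) : 0 <= mu -> 0 < L -> 0 < eta mu L Imax tb t.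
Proof.
by move=> mu_ge0 L_gt0; rewrite -invr_gt0 (lt_le_trans L_gt0) ?etaV_ge.
Qed.

End Schedule.

Theorem lemma11 (R : realFieldType) (d : nat) (H : 'M[R]_d)
  (mu L : R) (Imax : nat) (tb : nat -> nat) (ti : nat) (lam : R) :
  H^T = H ->
  (forall v : 'rV[R]_d, v != 0 -> 0 < (v *m H *m v^T) 0 0) ->
  eigenvalue H mu -> (forall a, eigenvalue H a -> mu <= a) ->
  eigenvalue H L -> (forall a, eigenvalue H a -> a <= L) ->
  L / mu = 2 ^+ Imax ->
  tb 0%N = 0%N -> (forall i, (i < Imax)%N -> (tb i < tb i.+1)%N) ->
  (ti < Imax)%N ->
  eigenvalue H lam -> mu * 2 ^+ ti <= lam -> lam < mu * 2 ^+ ti.+1 ->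
  vvar mu L Imax tb (tb ti.+1) lam <= 15 * eta mu L Imax tb (tb ti.+1) / lam.
Proof.
move=> _ posH eig_mu _ _ _ L_div_mu tb0 tbS ti_lt _ lam_ge lam_lt.
have mu_gt0 : 0 < mu := posdef_eigenvalue_gt0 posH eig_mu.
have pow2_le m n : (m <= n)%N -> (2 : R) ^+ m <= 2 ^+ n.
  by move=> ?; rewrite ler_weXn2l // ler1n.
have lam_gt0 : 0 < lam by rewrite (lt_le_trans _ lam_ge) ?mulr_gt0 ?exprn_gt0.
have L_eq : L = mu * 2 ^+ Imax by rewrite -L_div_mu mulrC divfK ?lt0r_neq0.
have lam_lt_L : lam < L by rewrite (lt_le_trans lam_lt) // L_eq ler_pM2l ?pow2_le.
have L_gt0 : 0 < L := lt_trans lam_gt0 lam_lt_L.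
have eta_pos t : 0 < eta mu L Imax tb t := eta_gt0 t (ltW mu_gt0) L_gt0.
have eta_step t : (t < tb ti.+1)%N ->
    lam <= (eta mu L Imax tb t)^-1 /\
    (eta mu L Imax tb t.+1)^-1 <= (eta mu L Imax tb t)^-1 + lam.
  case/(exists_phase tb0) => p p_le tp.
  have p_lt : (p < Imax)%N by apply: leq_trans ti_lt.
  split; first by rewrite (le_trans (ltW lam_lt_L)) ?etaV_ge ?ltW.
  by rewrite (etaV_step tbS p_lt tp) // lerD2l (le_trans _ lam_ge) // mulrC ler_pM2l ?pow2_le.
have v_le : vvar mu L Imax tb (tb ti.+1) lam <= 2 * eta mu L Imax tb (tb ti.+1) / lam.
  apply: (variance_le (v := vvar mu L Imax tb ^~ lam) lam_gt0 eta_pos _ _ _ eta_step) => //.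
    exact: vvar0.
  by move=> t; rewrite vvarS.
by rewrite (le_trans v_le) // -!mulrA ler_wpM2r ?ler_nat // divr_ge0 ?ltW.
Qed.
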